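(* Let $k\ge1$, $\beta\ge1$ integers, and consider weighted $k$-server on a uniform metric space $S$ with $n_{k-1}+1$ points and server weights $1,\beta,\ldots,\beta^{k-1}$, from an arbitrary initial configuration. Then the expected optimal (offline) cost of serving the random request sequence generated by $\mathsf{adversary}(k)$ is at most $\beta^{k-1}+\big((n_{k-1}+1)\cdot H(n_{k-1}+1)-1\big)\cdot c_{k-1}$, where $c_0=0$ and $c_\ell=\beta^{\ell-1}+\beta\cdot(\lceil n_{\ell-1}/2\rceil+1)\cdot c_{\ell-1}$ for $\ell>0$.
   Context: $H(n)=\sum_{i=1}^n1/i$. The sequence $n_0,n_1,\ldots$ is defined by $n_0=1$ and $n_i=\left(\lceil n_{i-1}/2\rceil+1\right)\left(\lfloor n_{i-1}/2\rfloor+1\right)$ for $i>0$. Weighted $k$-server on a uniform metric: $k$ servers with given weights sit at points; each requested point must be occupied by a server after serving it; moving a server of weight $w$ to a different point costs $w$; the optimal offline cost is the minimum cost of serving the whole (known) sequence. For every $\ell\ge1$ and every set $P$ with $|P|=n_\ell$, fix a set system $\mathcal{Q}(\ell,P)\subseteq 2^P$ consisting of $\lceil n_{\ell-1}/2\rceil+1$ sets each of size $n_{\ell-1}$, such that every $p\in P$ is missed by some set of $\mathcal{Q}(\ell,P)$, and for every $p\in P$ there is $q\in P$ with every set of $\mathcal{Q}(\ell,P)$ containing $p$ or $q$ (such systems exist). The procedure $\mathsf{strategy}(\ell,P)$ (with $|P|=n_\ell$) is: if $\ell=0$, request the unique point of $P$; if $\ell>0$, repeat $\beta\cdot(\lceil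 n_{\ell-1}/2\rceil+1)$ times: pick $P'$ uniformly at random from $\mathcal{Q}(\ell,P)$, independently of all previous random choices, and run $\mathsf{strategy}(\ell-1,P')$. The procedure $\mathsf{adversary}(k)$ on $S$ ($|S|=n_{k-1}+1$, all points initially unmarked) is: repeatedly pick a point $p$ uniformly at random from $S$ (independently) and mark it; if some point of $S$ is still unmarked, run $\mathsf{strategy}(k-1,S\setminus\{p\})$ and continue; otherwise stop. *)

From HB Require Import structures.
From mathcomp Require Import all_boot all_order all_algebra.
From mathcomp Require Import boolp classical_sets reals constructive_ereal ereal.
Set Implicit Arguments. Unset Strict Implicit. Unset Printing Implicit Defensive.
Import Order.TTheory GRing.Theory Num.Theory.

Fixpoint nn (i : nat) : nat :=
  match i with
  | 0 => 1
  | i'.+1 => (uphalf (nn i') + 1) * ((nn i')./2 + 1)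
  end.

Fixpoint cc (beta l : nat) : nat :=
  match l with
  | 0 => 0
  | l'.+1 => beta ^ l' + beta * (uphalf (nn l') + 1) * cc beta l'
  end.

Definition harmonic {R : numFieldType} (n : nat) : R :=
  (\sum_(i < n) (i.+1%:R)^-1)%R.

Definition valid_Q (T : finType) (Q : nat -> {set T} -> {set {set T}}) : Prop :=
  forall (l : nat) (P : {set T}), 1 <= l -> #|P| = nn l ->
    [/\ #|Q l P| = uphalf (nn l.-1) + 1,
        (forall A, A \in Q l P -> A \subset P /\ #|A| = nn l.-1),
        (forall p, p \in P -> exists2 A, A \in Q l P & p \notin A) &
        (forall p, p \in P -> exists2 q, q \in P &
            forall A, A \in Q l P -> (p \in A) || (q \in A))].

Section WeightedKServer.
Variables (T : finType) (k beta : nat).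

(* A configuration assigns a point to each server i < k; server i has weight beta^i. *)
Definition config := {ffun 'I_k -> T}.

(* cost of going from configuration c to c' : every server that changes
   position pays its weight (uniform metric) *)
Definition movecost (c c' : config) : nat :=
  \sum_(i < k | c i != c' i) beta ^ i.

(* minimum on option nat, None standing for +infinity *)
Definition omin (x y : option nat) : option nat :=
  match x, y with
  | None, _ => y
  | _, None => x
  | Some a, Some b => Some (minn a b)
  end.

(* Optimal offline cost of serving sigma from configuration c:
   minimum, over all sequences of configurations c_1..c_m with the t-th request
   occupied in c_t, of the total moving cost (dynamic programming form).
   None = no feasible schedule (only possible when k = 0). *)
Fixpoint opt (c : config) (sigma : seq T) : option nat :=
  match sigma with
  | [::] => Some 0
  | r :: rs =>
      \big[omin/None]_(c' : config | r \in codom c')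
         omap (addn (movecost c c')) (opt c' rs)
  end.

Variable R : realType.
Variable Q : nat -> {set T} -> {set {set T}}.

(* Randomized request-generating procedures are given by their expectation
   transformers: [strat l P f h] is the expected value of f applied to the
   full request sequence, when the requests produced so far are h and then
   strategy(l,P) is run and its requests appended, f being the (expected)
   value of the continuation. *)
Fixpoint strat (l : nat) (P : {set T}) (f : seq T -> R) (h : seq T) : R :=
  match l with
  | 0 => f (h ++ enum P)   (* |P| = n_0 = 1: request its unique point *)
  | l'.+1 =>
      iter (beta * (uphalf (nn l') + 1))
        (fun g h' => (#|Q l P|%:R)^-1 * \sum_(A in Q l P) strat l' A g h')%R
        f h
  end.

(* adversary(k) truncated to at most [fuel] marking rounds: runs that have not
   stopped within [fuel] rounds contribute 0. M = set of marked points. *)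
Fixpoint adv (fuel : nat) (M : {set T}) (f : seq T -> R) (h : seq T) : R :=
  match fuel with
  | 0 => 0%R
  | fuel'.+1 =>
      ((#|T|%:R)^-1 * \sum_(p : T)
         (if p |: M == [set: T] then f h
          else strat k.-1 [set~ p] (adv fuel' (p |: M) f) h))%R
  end.

(* Expected optimal offline cost of the random request sequence produced by
   adversary(k) from initial configuration c0: the expectation of a
   nonnegative random variable over the countably many terminating runs,
   i.e. the supremum of its truncated (partial) expectations. *)
Definition expected_opt (c0 : config) : \bar R :=
  ereal_sup [set ((adv fuel finset.set0 (fun s => (odflt 0 (opt c0 s))%:R) [::])%:E)
            | fuel in [set: nat]]%classic.

End WeightedKServer.

From HB Require Import structures.
From mathcomp Require Import all_boot all_order all_algebra.
From mathcomp Require Import boolp classical_sets reals constructive_ereal ereal.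
From mathcomp Require Import ring.
Import Order.TTheory GRing.Theory Num.Theory.
Set Implicit Arguments. Unset Strict Implicit. Unset Printing Implicit Defensive.

(* Strategy cost ([servable_all], induction on l): if a point x of P carries
   a server of index >= l+1, every run of strategy(l+1,P) is served at extra
   cost c_(l+1) without moving the servers of index >= l+1.  Indeed, moving
   server l onto the partner y of x costs beta^l; afterwards every set of
   Q(l+1,P) contains x or y, both covered by servers of index >= l, so each of
   the beta*(ceil(n_l/2)+1) rounds costs c_l by induction.

   Adversary cost ([adv_le]): initially the heaviest server is moved onto an
   unmarked point (cost beta^(k-1)).  Each phase strategy(k-1, S \ {p}) costs
   c_(k-1) and leaves the heaviest server on any chosen unmarked point q <> p,
   and the expected number of phases is bounded with the coupon-collector
   potential [pot]. *)

Lemma bigomin_le (I : eqType) (s : seq I) (P : pred I) (F : I -> option nat) i b :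
  i \in s -> P i -> F i = Some b ->
  exists a, \big[omin/None]_(j <- s | P j) F j = Some a /\ a <= b.
Proof.
elim: s => [//|x s IH]; rewrite inE big_cons => /orP[/eqP <-|His] Pi Fi.
  rewrite Pi Fi; case: (\big[omin/None]_(j <- s | P j) F j) => [a|] /=.
    by exists (minn b a); rewrite geq_minl.
  by exists b.
have [a [-> ha]] := IH His Pi Fi.
case: (P x) => //; last by exists a.
case: (F x) => [c|] /=; last by exists a.
by exists (minn c a); split => //; rewrite (leq_trans (geq_minr _ _) ha).
Qed.

Lemma bigomin_attained (I : eqType) (s : seq I) (P : pred I) (F : I -> option nat) a :
  \big[omin/None]_(j <- s | P j) F j = Some a -> exists2 j, P j & F j = Some a.
Proof.
elim: s a => [|x s IH] a; first by rewrite big_nil.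
rewrite big_cons; case Px: (P x); last exact: IH.
case Fx: (F x) => [c|] /=; last exact: IH.
case E: (\big[omin/None]_(j <- s | P j) F j) => [d|] /= [<-]; last by exists x.
by rewrite /minn; case: ltnP => _; [exists x | exact: IH E].
Qed.

Section OfflineSchedules.
Variables (T : finType) (k beta : nat).
Implicit Types (c : config T k) (h : seq T).

Lemma movecost_refl c : movecost beta c c = 0.
Proof. by rewrite /movecost big1 // => i; rewrite eqxx. Qed.

Lemma movecost_triangle c c1 c2 :
  movecost beta c c2 <= movecost beta c c1 + movecost beta c1 c2.
Proof.
rewrite /movecost !(big_mkcond (fun i => _ != _)) -big_split /=.
apply: leq_sum => i _; case: (eqVneq (c i) (c2 i)) => //= ne_c_c2.
by case: (eqVneq (c i) (c1 i)) => [<-|_]; rewrite ?ne_c_c2 ?leq_addr.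
Qed.

Definition move_server c (i : 'I_k) (y : T) : config T k :=
  [ffun j => if j == i then y else c j].

Lemma move_server_at c i y : move_server c i y i = y.
Proof. by rewrite ffunE eqxx. Qed.

Lemma move_server_other c i y j : j != i -> move_server c i y j = c j.
Proof. by rewrite ffunE => /negbTE ->. Qed.

Lemma movecost_move_server c i y : movecost beta c (move_server c i y) <= beta ^ i.
Proof.
rewrite /movecost (big_mkcond (fun j => c j != _)) (bigD1 i) //= big1 ?addn0.
  by case: ifP.
by move=> j ne_j_i; rewrite move_server_other // eqxx.
Qed.

Lemma opt_cons_le c c' r rs b :
  r \in codom c' -> opt beta c' rs = Some b ->
  exists a, opt beta c (r :: rs) = Some a /\ a <= movecost beta c c' + b.
Proof.
move=> r_c' opt_c' /=; apply: (bigomin_le (i := c')) => //.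
  exact: mem_index_enum.
by rewrite opt_c'.
Qed.

Lemma opt_cons_attained c r rs a :
  opt beta c (r :: rs) = Some a ->
  exists2 c' : config T k, r \in codom c' &
    exists b, opt beta c' rs = Some b /\ a = movecost beta c c' + b.
Proof.
move=> /= /bigomin_attained [c' r_c']; case opt_c': (opt beta c' rs) => [b|] //= [<-].
by exists c' => //; exists b.
Qed.

Lemma opt_triangle c c' rs b :
  opt beta c' rs = Some b ->
  exists a, opt beta c rs = Some a /\ a <= movecost beta c c' + b.
Proof.
case: rs => [[<-]|r rs]; first by exists 0.
case/opt_cons_attained => c'' r_c'' [b'' [opt_c'' ->]].
have [a [opt_c le_a]] := opt_cons_le c r_c'' opt_c''.
exists a; split => //; apply: (leq_trans le_a).
by rewrite addnA leq_add2r movecost_triangle.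
Qed.

(* [reach c0 h c m]: some schedule serves the prefix h from c0 and ends in
   configuration c at cost at most m; it is phrased through continuations, so
   that it composes with whatever requests follow. *)
Definition reach (c0 : config T k) h c m := forall rest b,
  opt beta c rest = Some b ->
  exists a, opt beta c0 (h ++ rest) = Some a /\ a <= m + b.

Variable c0 : config T k.

Lemma reach_start c : reach c0 [::] c (movecost beta c0 c).
Proof. by move=> rest b; apply: opt_triangle. Qed.

Lemma reach_weaken h c m m' : m <= m' -> reach c0 h c m -> reach c0 h c m'.
Proof.
move=> le_m reach_c rest b /reach_c [a [opt_a le_a]].
by exists a; split; rewrite // (leq_trans le_a) // leq_add2r.
Qed.

Lemma reach_move h c c' m :
  reach c0 h c m -> reach c0 h c' (m + movecost beta c c').
Proof.
move=> reach_c rest b /(opt_triangle c) [a' [/reach_c [a [opt_a le_a]] le_a']].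
by exists a; split; rewrite // (leq_trans le_a) // -addnA leq_add2l.
Qed.

Lemma reach_serve h c m r :
  r \in codom c -> reach c0 h c m -> reach c0 (h ++ [:: r]) c m.
Proof.
move=> r_c reach_c rest b /(opt_cons_le c r_c) [a' [/reach_c [a [opt_a le_a]]]].
rewrite movecost_refl add0n => le_a'.
by exists a; split; rewrite -?catA // (leq_trans le_a) // leq_add2l.
Qed.

Lemma reach_opt h c m : reach c0 h c m -> exists a, opt beta c0 h = Some a /\ a <= m.
Proof. by move=> /(_ [::] 0 erefl); rewrite cats0 addn0. Qed.

End OfflineSchedules.

(* It is the possibilistic
   shadow of the expectation transformer [strat]. *)
Fixpoint all_runs (T : finType) (beta : nat) (Q : nat -> {set T} -> {set {set T}})
  (l : nat) (P : {set T}) (Phi : seq T -> Prop) (h : seq T) : Prop :=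
  match l with
  | 0 => Phi (h ++ enum P)
  | l'.+1 =>
      iter (beta * (uphalf (nn l') + 1))
        (fun G h' => forall A, A \in Q l P -> all_runs beta Q l' A G h')
        Phi h
  end.

Section Runs.
Variables (T : finType) (beta : nat) (Q : nat -> {set T} -> {set {set T}}).

Lemma all_runs_mono l P (Phi Psi : seq T -> Prop) h :
  (forall h', Phi h' -> Psi h') -> all_runs beta Q l P Phi h -> all_runs beta Q l P Psi h.
Proof.
elim: l P Phi Psi h => [|l IH] P Phi Psi h PhiPsi /=; first exact: PhiPsi.
elim: (beta * _) h => [|n IHn] h /=; first exact: PhiPsi.
by move=> runs_Phi A QA; apply: IH (runs_Phi A QA) => h'; apply: IHn.
Qed.

Lemma all_runs_T l P (Phi : seq T -> Prop) h :
  (forall h', Phi h') -> all_runs beta Q l P Phi h.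
Proof.
elim: l P Phi h => [|l IH] P Phi h Phi_T /=; first exact: Phi_T.
elim: (beta * _) h => [|n IHn] h /=; first exact: Phi_T.
by move=> A QA; apply: IH => h'; apply: IHn.
Qed.

Lemma all_runs_forall (I : Type) l P (Phi : I -> seq T -> Prop) h :
  (forall i, all_runs beta Q l P (Phi i) h) ->
  all_runs beta Q l P (fun h' => forall i, Phi i h') h.
Proof.
elim: l P Phi h => [|l IH] P Phi h //=.
elim: (beta * _) h => [|n IHn] h //= runs_Phi A QA.
set F := fun G h' => forall A', A' \in Q l.+1 P -> all_runs beta Q l A' G h'.
apply: (@all_runs_mono _ _ (fun h' => forall i, iter n F (Phi i) h')).
  by move=> h'; apply: IHn.
by apply: IH => i; apply: runs_Phi.
Qed.

Variable R : realType.
Local Open Scope ring_scope.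

Lemma mean_le (I : finType) (S : {pred I}) (v : I -> R) (C : R) :
  0 <= C -> (forall A, A \in S -> v A <= C) ->
  (#|S|%:R)^-1 * \sum_(A in S) v A <= C.
Proof.
move=> C_ge0 v_le; have [->|S_gt0] := posnP #|S|; first by rewrite invr0 mul0r.
have S_gt0' : (0 : R) < #|S|%:R by rewrite ltr0n.
rewrite -(ler_pM2l S_gt0') mulrA mulfV ?gt_eqF // mul1r mulr_natl -sumr_const.
exact: ler_sum.
Qed.

Lemma strat_le l P (f : seq T -> R) (Phi : seq T -> Prop) h C :
  0 <= C -> (forall h', Phi h' -> f h' <= C) ->
  all_runs beta Q l P Phi h -> strat beta Q l P f h <= C.
Proof.
elim: l P f Phi h => [|l IH] P f Phi h C_ge0 f_le /=; first exact: f_le.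
elim: (beta * _)%N h => [|n IHn] h /=; first exact: f_le.
by move=> runs_Phi; apply: mean_le => // A QA; apply: IH (runs_Phi A QA).
Qed.

End Runs.

Section StrategyCost.
Variables (T : finType) (k beta : nat) (Q : nat -> {set T} -> {set {set T}}).
Variable c0 : config T k.
Hypothesis Q_valid : valid_Q Q.
Implicit Types (c : config T k) (h : seq T).

Definition agree_from l c c' := forall j : 'I_k, l <= j -> c' j = c j.

Definition covers l c x := exists2 j : 'I_k, l <= j & c j = x.

Lemma agree_from_trans l c1 c2 c3 :
  agree_from l c1 c2 -> agree_from l c2 c3 -> agree_from l c1 c3.
Proof. by move=> agree12 agree23 j le_lj; rewrite agree23 ?agree12. Qed.

Lemma agree_from_le l l' c c' : l <= l' -> agree_from l c c' -> agree_from l' c c'.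
Proof. by move=> le_ll' agree_cc' j le_l'j; rewrite agree_cc' ?(leq_trans le_ll'). Qed.

Lemma covers_agree l c c' x : agree_from l c c' -> covers l c x -> covers l c' x.
Proof. by move=> agree_cc' [j le_lj <-]; exists j; rewrite ?agree_cc'. Qed.

Definition servable l := forall (P : {set T}) x c h m,
  #|P| = nn l -> x \in P -> covers l c x -> reach beta c0 h c m ->
  all_runs beta Q l P
    (fun h' => exists2 c', reach beta c0 h' c' (m + cc beta l) & agree_from l c c') h.

(* strategy(0,{x}) requests x itself, which is already covered. *)
Lemma servable0 : servable 0.
Proof.
move=> P x c h m /eqP/cards1P[y P_y] xP [j _ cj_x] reach_c /=.
move: xP; rewrite P_y => /set1P x_y; rewrite enum_set1 -x_y.
exists c; rewrite ?addn0 //; apply: reach_serve reach_c.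
by rewrite -cj_x codom_f.
Qed.

Lemma rounds_servable l P x y base (Psi : seq T -> Prop) M :
  servable l ->
  (forall A, A \in Q l.+1 P -> #|A| = nn l /\ (x \in A) || (y \in A)) ->
  covers l base x -> covers l base y ->
  (forall h' c', reach beta c0 h' c' M -> agree_from l base c' -> Psi h') ->
  forall n h c m, agree_from l base c -> reach beta c0 h c m -> m + n * cc beta l <= M ->
  iter n (fun G h' => forall A, A \in Q l.+1 P -> all_runs beta Q l A G h') Psi h.
Proof.
move=> serv_l Q_xy cov_x cov_y Psi_end.
elim=> [|n IHn] h c m agree_c reach_c le_M /=.
  by apply: (Psi_end _ c) => //; apply: reach_weaken reach_c; rewrite mul0n addn0 in le_M.
move=> A QA; have [card_A xy_A] := Q_xy A QA.
have [z zA cov_z] : exists2 z, z \in A & covers l c z.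
  by case/orP: xy_A => [xA|yA]; [exists x | exists y];
    rewrite //; apply: covers_agree agree_c _.
apply: all_runs_mono (serv_l A z c h m card_A zA cov_z reach_c).
move=> h' [c' reach_c' agree_c']; apply: IHn reach_c' _.
  exact: agree_from_trans agree_c agree_c'.
by rewrite -addnA -mulSn.
Qed.

Lemma servable_step l : l < k -> servable l -> servable l.+1.
Proof.
move=> lt_lk serv_l P x c h m card_P xP [j0 lt_lj0 cj0_x] reach_c.
have [_ Q_sub _ Q_partner] := Q_valid (l := l.+1) erefl card_P.
have [y yP Q_xy] := Q_partner x xP.
pose i : 'I_k := Ordinal lt_lk.
pose c1 := move_server c i y.
have reach_c1 : reach beta c0 h c1 (m + beta ^ l).
  apply: reach_weaken (reach_move (c' := c1) reach_c).
  by rewrite leq_add2l movecost_move_server.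
have agree_c1 : agree_from l.+1 c c1.
  by move=> j lt_lj; rewrite move_server_other // -val_eqE neq_ltn lt_lj orbT.
pose Psi h' := exists2 c', reach beta c0 h' c' (m + cc beta l.+1) & agree_from l.+1 c c'.
apply: (@rounds_servable l P x y c1 Psi (m + cc beta l.+1) serv_l
          _ _ _ _ _ h c1 (m + beta ^ l) _ reach_c1).
- by move=> A QA; have [_ ->] := Q_sub A QA; rewrite Q_xy.
- by exists j0; [apply: ltnW | rewrite agree_c1].
- by exists i; rewrite ?move_server_at.
- move=> h' c' reach_c' agree_c'; exists c' => //.
  exact: agree_from_trans agree_c1 (agree_from_le (leqnSn l) agree_c').
- by move=> j _.
by rewrite -addnA leqnn.
Qed.

Lemma servable_all l : l < k -> servable l.
Proof.
elim: l => [|l IH] lt_lk; first exact: servable0.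
by apply: servable_step (ltnW lt_lk) (IH (ltnW lt_lk)).
Qed.

End StrategyCost.

Section Potential.
Variable R : numFieldType.
Local Open Scope ring_scope.

Lemma harmonicS n : harmonic n.+1 = harmonic n + (n.+1%:R)^-1 :> R.
Proof. by rewrite /harmonic big_ord_recr. Qed.

Lemma harmonic_ge0 n : 0 <= harmonic n :> R.
Proof. by apply: sumr_ge0 => i _; rewrite invr_ge0 ler0n. Qed.

Lemma harmonic_ge1 n : 1 <= harmonic n.+1 :> R.
Proof.
rewrite /harmonic big_ord_recl /= invr1 lerDl.
by apply: sumr_ge0 => i _; rewrite invr_ge0 ler0n.
Qed.

(* Coupon-collector potential: once j < N of the N points are marked, the
   adversary still plays pot N j phases in expectation (its N * H(N - j)
   expected remaining marking rounds, minus the final one). *)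
Definition pot (N j : nat) : R := N%:R * harmonic (N - j) - 1.

Lemma pot_ge0 N j : (j < N)%N -> 0 <= pot N j.
Proof.
move=> lt_jN; have Nj_gt0 : (0 < N - j)%N by rewrite subn_gt0.
rewrite /pot subr_ge0 -(prednK Nj_gt0).
have N_ge1 : 1 <= N%:R :> R by rewrite ler1n (leq_ltn_trans _ lt_jN).
exact: mulr_ege1 N_ge1 (harmonic_ge1 _).
Qed.

Lemma pot_ge_m1 N j : 0 <= 1 + pot N j.
Proof. by rewrite /pot addrC subrK mulr_ge0 ?ler0n ?harmonic_ge0. Qed.

Lemma pot_full N : pot N N = -1.
Proof. by rewrite /pot subnn /harmonic big_ord0 mulr0 sub0r. Qed.

(* One marking round: the marked point is old (j choices) or new (N - j). *)
Lemma pot_recurrence N j : (j < N)%N ->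
  j%:R * (1 + pot N j) + (N - j)%:R * (1 + pot N j.+1) = N%:R * pot N j.
Proof.
move=> lt_jN; have [x Nj_x] : exists x, (N - j = x.+1)%N.
  by exists (N - j).-1; rewrite prednK // subn_gt0.
have N_eq : N = (j + x.+1)%N by rewrite -Nj_x subnKC // ltnW.
rewrite /pot Nj_x subnS Nj_x /= harmonicS N_eq natrD.
have x_neq0 : x.+1%:R != 0 :> R by rewrite pnatr_eq0.
by field.
Qed.

Lemma pot_mean (T : finType) (M : {set T}) : (#|M| < #|T|)%N ->
  \sum_(p : T) (1 + pot #|T| #|p |: M|) = #|T|%:R * pot #|T| #|M| :> R.
Proof.
move=> lt_M; rewrite (bigID (mem M)) /=.
rewrite (eq_bigr (fun=> 1 + pot #|T| #|M|)) => [|p pM]; last by rewrite cardsU1 pM.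
rewrite [X in _ + X](eq_bigr (fun=> 1 + pot #|T| #|M|.+1)) => [|p /negPf pM]; last first.
  by rewrite cardsU1 pM.
rewrite [X in _ + X](eq_bigl (mem (~: M))) => [|p]; last by rewrite !inE.
by rewrite !sumr_const -pot_recurrence // !mulr_natl -(cardsC M) addKn.
Qed.

End Potential.
Arguments pot {R}.

Section AdversaryCost.
Variables (R : realType) (T : finType) (k' beta : nat).
Variables (Q : nat -> {set T} -> {set {set T}}) (c0 : config T k'.+1).
Hypothesis Q_valid : valid_Q Q.
Hypothesis card_T : #|T| = (nn k').+1.
Local Open Scope ring_scope.

Let opt_val (s : seq T) : R := (odflt 0 (opt beta c0 s))%:R.

Definition phase_inv (M : {set T}) (h : seq T) (m : nat) := forall q, q \notin M ->
  exists2 c : config T k'.+1, c ord_max = q & reach beta c0 h c m.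

(* A phase strategy(k-1, S \ {p}) costs c_{k-1} and leaves the heaviest
   server where it was, so the invariant survives marking p. *)
Lemma phase_inv_strategy p M h m : phase_inv M h m ->
  all_runs beta Q k' [set~ p] (fun h' => phase_inv (p |: M) h' (m + cc beta k')) h.
Proof.
move=> inv_M; apply: (all_runs_forall (Phi := fun q h' => q \notin p |: M ->
  exists2 c : config T k'.+1, c ord_max = q & reach beta c0 h' c (m + cc beta k'))) => q.
have [pMq|] := boolP (q \in p |: M); first by apply: all_runs_T => h' /negP[].
rewrite in_setU1 negb_or => /andP[ne_qp qM].
have [c cK_q reach_c] := inv_M q qM.
have card_P : #|[set~ p]| = nn k' by rewrite cardsC1 card_T.
have qP : q \in [set~ p] by rewrite in_setC1.
have cov_q : covers k' c q by exists ord_max.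
apply: all_runs_mono (servable_all Q_valid (ltnSn k') card_P qP cov_q reach_c).
by move=> h' [c' reach_c' agree_c'] _; exists c'; rewrite ?agree_c'.
Qed.

Lemma adv_round_le fuel p (M : {set T}) h m :
  (forall (M' : {set T}) h' m', (#|M'| < #|T|)%N -> phase_inv M' h' m' ->
     adv k'.+1 beta Q fuel M' opt_val h' <= m'%:R + (cc beta k')%:R * pot #|T| #|M'|) ->
  (#|M| < #|T|)%N -> phase_inv M h m ->
  (if p |: M == [set: T] then opt_val h
   else strat beta Q k' [set~ p] (adv k'.+1 beta Q fuel (p |: M) opt_val) h)
  <= m%:R + (cc beta k')%:R * (1 + pot #|T| #|p |: M|).
Proof.
move=> adv_le_next lt_M inv_M; case: ifP => [/eqP M_full|M_not_full].
  rewrite M_full cardsT pot_full addrN mulr0 addr0.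
  have pM : p \notin M.
    by apply: contraTN lt_M => pM; rewrite -leqNgt -cardsT -M_full cardsU1 pM.
  have [c _ /reach_opt [a [opt_a le_a]]] := inv_M p pM.
  by rewrite /opt_val opt_a ler_nat.
have lt_pM : (#|p |: M| < #|T|)%N.
  by rewrite -cardsT proper_card // properT M_not_full.
apply: (strat_le (Phi := fun h' => phase_inv (p |: M) h' (m + cc beta k'))).
- by rewrite addr_ge0 ?mulr_ge0 ?pot_ge_m1.
- move=> h' inv_h'; apply: le_trans (adv_le_next _ _ _ lt_pM inv_h') _.
  by rewrite natrD (mulrDr _ 1) mulr1 addrA.
exact: phase_inv_strategy.
Qed.

Lemma adv_le fuel (M : {set T}) h m : (#|M| < #|T|)%N -> phase_inv M h m ->
  adv k'.+1 beta Q fuel M opt_val h <= m%:R + (cc beta k')%:R * pot #|T| #|M|.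
Proof.
elim: fuel M h m => [|fuel IH] M h m lt_M inv_M /=.
  by rewrite addr_ge0 ?mulr_ge0 ?pot_ge0.
have T_gt0 : (0 : R) < #|T|%:R by rewrite ltr0n (leq_ltn_trans _ lt_M).
rewrite -(ler_pM2l T_gt0) mulrA mulfV ?gt_eqF // mul1r.
apply: le_trans (ler_sum _ (fun p _ => adv_round_le p IH lt_M inv_M)) _.
rewrite big_split /= sumr_const -mulr_sumr pot_mean // (_ : #|xpredT| = #|T|) //.
by rewrite le_eqVlt; apply/orP; left; apply/eqP; ring.
Qed.

End AdversaryCost.

Theorem lemma7 (R : realType) (T : finType) (k beta : nat)
  (Q : nat -> {set T} -> {set {set T}}) (c0 : config T k) :
  1 <= k -> 1 <= beta ->
  #|T| = (nn k.-1).+1 ->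
  valid_Q Q ->
  (expected_opt beta R Q c0 <=
   ((beta ^ k.-1)%:R +
    (((nn k.-1).+1)%:R * harmonic (nn k.-1).+1 - 1) * (cc beta k.-1)%:R)%:E)%E.
Proof.
case: k c0 => [//|k'] c0 _ _ /= card_T Q_valid.
have inv0 : phase_inv beta c0 finset.set0 [::] (beta ^ k').
  move=> q _; set c := move_server c0 ord_max q.
  exists c; first exact: move_server_at.
  exact: reach_weaken (movecost_move_server beta c0 ord_max q) (reach_start c0 (c := c)).
apply: ge_ereal_sup => _ [fuel _ <-]; rewrite lee_fin.
apply: le_trans (adv_le R Q_valid card_T fuel _ inv0) _; first by rewrite cards0 card_T.
by rewrite cards0 /pot subn0 card_T mulrC.
Qed.
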